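(* A map $F = (f,p,x)$ in $\mathfrak{G}\left[ (\mathbb{X}, \dagger) \right]_X$ is deterministic if and only if $p=0$.
   Context: Let $(\mathbb{X}, \dagger)$ be a dagger additive category (a dagger category enriched in abelian groups with additive dagger and finite biproducts satisfying $\pi_j^\dagger = \iota_j$), and fix an object $X$. A map $p: B \to B$ is $\dagger$-positive if $p = \phi^\dagger \circ \phi$ for some $\phi$. The Markov category $\mathfrak{G}\left[ (\mathbb{X}, \dagger) \right]_X$ has the objects of $\mathbb{X}$ and maps $A \to B$ the triples $(f,p,x)$ with $f: A \to B$, $p: B \to B$ $\dagger$-positive, $x: X \to B$; identities $(\mathsf{id}_A,0,0)$; composition $(g,q,y) \circ (f,p,x) = (g \circ f, q + g \circ p \circ g^\dagger, y + g \circ x)$; monoidal product $A \otimes B = A \oplus B$, $(f,p,x) \otimes (g,q,y) = \left(f \oplus g, p \oplus q, \begin{bmatrix} x \\ y \end{bmatrix}\right)$; copy $\mathsf{copy}_A = \left(\begin{bmatrix} \mathsf{id}_A \\ \mathsf{id}_A \end{bmatrix}, 0, 0\right)$ and delete $(0,0,0): A \to \mathsf{0}$. A map $F: A \to B$ in a Markov category is deterministic if $\mathsf{copy}_B \circ F = (F \otimes F) \circ \mathsf{copy}_A$. *)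

From HB Require Import structures.
From mathcomp Require Import all_boot all_algebra.
Set Implicit Arguments. Unset Strict Implicit. Unset Printing Implicit Defensive.
Import GRing.Theory.
Local Open Scope ring_scope.

Record DagAddCat := {
  ob : Type;
  hom : ob -> ob -> zmodType;
  comp : forall A B C : ob, hom B C -> hom A B -> hom A C;
  idm : forall A : ob, hom A A;
  dag : forall A B : ob, hom A B -> hom B A;
  compA : forall (A B C D : ob) (h : hom C D) (g : hom B C) (f : hom A B),
      comp h (comp g f) = comp (comp h g) f;
  comp1f : forall (A B : ob) (f : hom A B), comp (idm B) f = f;
  compf1 : forall (A B : ob) (f : hom A B), comp f (idm A) = f;
  compDl : forall (A B C : ob) (g1 g2 : hom B C) (f : hom A B),
      comp (g1 + g2) f = comp g1 f + comp g2 f;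
  compDr : forall (A B C : ob) (g : hom B C) (f1 f2 : hom A B),
      comp g (f1 + f2) = comp g f1 + comp g f2;
  dagK : forall (A B : ob) (f : hom A B), dag (dag f) = f;
  dag_comp : forall (A B C : ob) (g : hom B C) (f : hom A B),
      dag (comp g f) = comp (dag f) (dag g);
  dag_id : forall A : ob, dag (idm A) = idm A;
  dagD : forall (A B : ob) (f g : hom A B), dag (f + g) = dag f + dag g;
  zob : ob;
  zob_init : forall (A : ob) (f : hom zob A), f = 0;
  zob_term : forall (A : ob) (f : hom A zob), f = 0;
  bip : ob -> ob -> ob;
  inl : forall A B : ob, hom A (bip A B);
  inr : forall A B : ob, hom B (bip A B);
  prl : forall A B : ob, hom (bip A B) A;
  prr : forall A B : ob, hom (bip A B) B;
  prl_inl : forall A B : ob, comp (prl A B) (inl A B) = idm A;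
  prr_inr : forall A B : ob, comp (prr A B) (inr A B) = idm B;
  prl_inr : forall A B : ob, comp (prl A B) (inr A B) = 0;
  prr_inl : forall A B : ob, comp (prr A B) (inl A B) = 0;
  bip_id : forall A B : ob,
      comp (inl A B) (prl A B) + comp (inr A B) (prr A B) = idm (bip A B);
  dag_prl : forall A B : ob, dag (prl A B) = inl A B;
  dag_prr : forall A B : ob, dag (prr A B) = inr A B
}.

Arguments hom : clear implicits.
Arguments comp {d A B C} g f.
Arguments idm {d} A.
Arguments dag {d A B} f.
Arguments bip {d} A B.
Arguments inl {d} A B.
Arguments inr {d} A B.
Arguments prl {d} A B.
Arguments prr {d} A B.

Section G.
Variable C : DagAddCat.
Variable X : ob C.

Definition dag_positive (B : ob C) (p : hom C B B) : Prop :=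
  exists (B' : ob C) (phi : hom C B B'), p = comp (dag phi) phi.

(* Underlying data (f, p, x) of a map A -> B in G[(X,†)]_X.  Maps of the
   category are the triples with p †-positive; positivity is imposed as a
   hypothesis where needed. *)
Record Gtriple (A B : ob C) := GT {
  gf : hom C A B;
  gp : hom C B B;
  gx : hom C X B
}.

Definition gcomp (A B D : ob C) (G : Gtriple B D) (F : Gtriple A B) : Gtriple A D :=
  GT (comp (gf G) (gf F))
     (gp G + comp (gf G) (comp (gp F) (dag (gf G))))
     (gx G + comp (gf G) (gx F)).

Definition hsum (A B A' B' : ob C) (f : hom C A A') (g : hom C B B') :
  hom C (bip A B) (bip A' B') :=
  comp (inl A' B') (comp f (prl A B)) + comp (inr A' B') (comp g (prr A B)).

Definition hpair (Y A B : ob C) (x : hom C Y A) (y : hom C Y B) : hom C Y (bip A B) :=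
  comp (inl A B) x + comp (inr A B) y.

Definition gtensor (A B A' B' : ob C) (F : Gtriple A B) (G : Gtriple A' B') :
  Gtriple (bip A A') (bip B B') :=
  GT (hsum (gf F) (gf G)) (hsum (gp F) (gp G)) (hpair (gx F) (gx G)).

Definition gcopy (A : ob C) : Gtriple A (bip A A) :=
  GT (hpair (idm A) (idm A)) 0 0.

Definition gdelete (A : ob C) : Gtriple A (zob C) := GT 0 0 0.

Definition gid (A : ob C) : Gtriple A A := GT (idm A) 0 0.

Definition deterministic (A B : ob C) (F : Gtriple A B) : Prop :=
  gcomp (gcopy B) F = gcomp (gtensor F F) (gcopy A).

End G.
Arguments Gtriple : clear implicits.

(* Of the three components of copy ∘ F and (F ⊗ F) ∘ copy, the first and the
   last always agree (both are [f ; f] and [x ; x]), so determinism says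
   exactly that Δ p Δ† = p ⊕ p, where Δ = [id ; id].  The (1,2) entry
   π1 (-) ι2 of the left side is p, that of the right side is 0. *)
From Pilot Require Import Defs.
From mathcomp Require Import all_boot all_algebra.
Local Open Scope ring_scope.
Import GRing.Theory.
(* Re-export [Defs.hom], shadowed by [vector.hom] from all_algebra. *)
Import Defs.

Section DaggerBiproducts.
Variable C : DagAddCat.

Lemma comp0r (A B D : ob C) (g : hom C B D) : comp g (0 : hom C A B) = 0.
Proof. by apply: (addrI (comp g 0)); rewrite -compDr !addr0. Qed.

Lemma comp0l (A B D : ob C) (f : hom C A B) : comp (0 : hom C B D) f = 0.
Proof. by apply: (addrI (comp 0 f)); rewrite -compDl !addr0. Qed.

Lemma comp_hpair (Y Z A B : ob C) (x : hom C Y A) (y : hom C Y B) (h : hom C Z Y) :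
  comp (hpair x y) h = hpair (comp x h) (comp y h).
Proof. by rewrite /hpair compDl -!compA. Qed.

Lemma prl_hpair (Y A B : ob C) (x : hom C Y A) (y : hom C Y B) :
  comp (prl A B) (hpair x y) = x.
Proof. by rewrite /hpair compDr !compA prl_inl prl_inr comp1f comp0l addr0. Qed.

Lemma prr_hpair (Y A B : ob C) (x : hom C Y A) (y : hom C Y B) :
  comp (prr A B) (hpair x y) = y.
Proof. by rewrite /hpair compDr !compA prr_inl prr_inr comp1f comp0l add0r. Qed.

Lemma hsumE (A B A' B' : ob C) (f : hom C A A') (g : hom C B B') :
  hsum f g = hpair (comp f (prl A B)) (comp g (prr A B)).
Proof. by []. Qed.

Lemma hsum_hpair (Y A B A' B' : ob C) (f : hom C A A') (g : hom C B B')
    (x : hom C Y A) (y : hom C Y B) :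
  comp (hsum f g) (hpair x y) = hpair (comp f x) (comp g y).
Proof. by rewrite hsumE comp_hpair -!compA prl_hpair prr_hpair. Qed.

Lemma hsum_inr (A B A' B' : ob C) (f : hom C A A') (g : hom C B B') :
  comp (hsum f g) (inr A B) = comp (inr A' B') g.
Proof.
by rewrite hsumE comp_hpair -!compA prl_inr prr_inr compf1 /hpair !comp0r add0r.
Qed.

Lemma hsum00 (A B A' B' : ob C) : hsum (0 : hom C A A') (0 : hom C B B') = 0.
Proof. by rewrite hsumE !comp0l /hpair !comp0r addr0. Qed.

Lemma dag_comp_inr (Y A B : ob C) (h : hom C Y (bip A B)) :
  comp (dag h) (inr A B) = dag (comp (prr A B) h).
Proof. by rewrite dag_comp dag_prr. Qed.

Lemma hpair_conj_offdiag (A : ob C) (p : hom C A A) :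
  comp (prl A A) (comp (comp (hpair (idm A) (idm A))
                              (comp p (dag (hpair (idm A) (idm A))))) (inr A A)) = p.
Proof.
rewrite -!compA dag_comp_inr prr_hpair dag_id compf1.
by rewrite compA prl_hpair comp1f.
Qed.

Lemma hsum_offdiag (A B A' B' : ob C) (f : hom C A A') (g : hom C B B') :
  comp (prl A' B') (comp (hsum f g) (inr A B)) = 0.
Proof. by rewrite hsum_inr compA prl_inr comp0l. Qed.

Variable X : ob C.

Lemma deterministicE (A B : ob C) (F : Gtriple C X A B) :
  deterministic F <->
  comp (hpair (idm B) (idm B)) (comp (gp F) (dag (hpair (idm B) (idm B))))
  = hsum (gp F) (gp F).
Proof.
case: F => f p x; rewrite /deterministic /gcomp /= comp0l !comp0r !addr0 !add0r.
have -> : comp (hpair (idm B) (idm B)) f = comp (hsum f f) (hpair (idm A) (idm A)).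
  by rewrite hsum_hpair comp_hpair !comp1f !compf1.
have -> : comp (hpair (idm B) (idm B)) x = hpair x x by rewrite comp_hpair !comp1f.
by split => [[] | ->].
Qed.

End DaggerBiproducts.

Theorem mainTheorem2 (C : DagAddCat) (X A B : ob C) (F : Gtriple C X A B)
  (hF : dag_positive (gp F)) :
  deterministic F <-> gp F = 0.
Proof.
split => [/deterministicE Ep | p0]; last apply/deterministicE.
- by rewrite -[gp F]hpair_conj_offdiag Ep hsum_offdiag.
- by rewrite p0 comp0l !comp0r hsum00.
Qed.
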